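(* Let $d\ge 1$, let $\Lambda$ be a $(d-2)$-dimensional simplicial complex with vertex set $[n]$, and let $\Gamma=0*\Lambda$ be the cone over $\Lambda$ with a new apex vertex $0$. Let $p':[n]\to\mathbb{R}^{d-1}$ be such that the coordinates $\{p'(s)_t:s\in[n],t\in[d-1]\}$ are algebraically independent over $\mathbb{Q}$, and set $\mathbb{F}'=\mathbb{Q}(p'(s)_t)$. Let $a_1,\dots,a_n\in\mathbb{R}$ be algebraically independent over $\mathbb{F}'$, and let $\mathbb{F}\subseteq\mathbb{R}$ be any field containing $\mathbb{F}'(a_1,\dots,a_n)$. Define $p:\{0,1,\dots,n\}\to\mathbb{F}^d$ by $p(0)=(0,\dots,0,-1)$ and $p(s)=((1+a_s)p'(s),a_s)$ for $s\in[n]$. Then for all $i\le\lfloor (d-1)/2\rfloor$ there exists an $\mathbb{F}'$-linear map $\psi_i:\mathcal{S}^a_i(\Lambda,p';\mathbb{F}')\to\mathcal{S}^a_i(\Gamma,p;\mathbb{F})$ such that for every $\omega'\in\mathcal{S}^a_i(\Lambda,p';\mathbb{F}')$, $\mathrm{supp}(\psi_i(\omega'))=\mathrm{skel}_{i-1}(0*\mathrm{supp}(\omega'))$.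
   Context: Simplicial complexes are nonempty families of subsets of a finite vertex set closed under subsets and containing all singletons; an $i$-face has $i+1$ elements. The cone $0*\Lambda=\{\sigma,\sigma\cup\{0\}:\sigma\in\Lambda\}$; $\mathrm{skel}_m(K)$ is the subcomplex of faces of dimension $\le m$. For a complex $K$ with vertex set $W$, a field $\mathbb{K}\subseteq\mathbb{R}$ and $r:W\to\mathbb{K}^e$ with $e-1=\dim K$, set $\theta_t=\sum_{v\in W}r(v)_tx_v$ for $t\in[e]$, and for a linear form $\ell=\sum_v\ell_vx_v$ let $\partial_\ell=\sum_v\ell_v\,\partial/\partial x_v$. A linear $i$-stress on $(K,r;\mathbb{K})$ is a homogeneous degree-$i$ polynomial $\lambda\in\mathbb{K}[x_v:v\in W]$ all of whose monomials with nonzero coefficient are supported on faces of $K$, with $\partial_{\theta_t}\lambda=0$ for all $t$; it is an affine $i$-stress if moreover $\partial_c\lambda=0$ where $c=\sum_{v\in W}x_v$. $\mathcal{S}^a_i(K,r;\mathbb{K})$ denotes the vector space of affine $i$-stresses. For a degree-$i$ stress $\lambda$ and an $(i-1)$-face $\sigma$, $\lambda_\sigma$ is the coefficient of $\prod_{v\in\sigma}x_v$, and $\mathrm{supp}(\lambda)$ is the subcomplex generated by the $(i-1)$-faces $\sigma$ with $\lambda_\sigma\ne0$. *)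

From HB Require Import structures.
From mathcomp Require Import all_boot all_order all_algebra.
From mathcomp Require Import reals.
From mathcomp Require Import mpoly.

Set Implicit Arguments.
Unset Strict Implicit.
Unset Printing Implicit Defensive.

Import Order.TTheory GRing.Theory Num.Theory.
Local Open Scope ring_scope.

Section Defs.
Variable R : realType.

Definition is_subfield (K : R -> Prop) : Prop :=
  [/\ K 1,
      (forall x y, K x -> K y -> K (x - y)),
      (forall x y, K x -> K y -> K (x * y)) &
      (forall x, K x -> K x^-1)].

Definition ratK : R -> Prop := fun x => exists q : rat, x = ratr q.

Definition genfield (S : R -> Prop) : R -> Prop :=
  fun x => forall K, is_subfield K -> (forall y, S y -> K y) -> K x.

Definition alg_indep_over (K : R -> Prop) (I : finType) (x : I -> R) : Prop :=
  forall P : {mpoly R[#|I|]},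
    (forall m, K P@_m) ->
    P.@[fun j => x (enum_val j)] = 0 -> P = 0.

Definition is_complex (m : nat) (K : {set {set 'I_m}}) : Prop :=
  [/\ K != set0,
      (forall s t : {set 'I_m}, s \in K -> t \subset s -> t \in K) &
      (forall v : 'I_m, [set v] \in K)].

(* The complex has dimension k - 1: faces have at most k elements and some
   face has exactly k elements. *)
Definition has_dim_card (m : nat) (K : {set {set 'I_m}}) (k : nat) : Prop :=
  (forall s, s \in K -> #|s| <= k)%N /\ (exists2 s, s \in K & #|s| = k).

(* Cone over a family of sets on 'I_n with apex ord0 (the vertex j of the
   base corresponds to the vertex lift ord0 j = j.+1 of the cone):
   0 * L = { s, s U {0} : s in L }. *)
Definition cone (n : nat) (L : {set {set 'I_n}}) : {set {set 'I_n.+1}} :=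
  [set t : {set 'I_n.+1} | (lift ord0 @^-1: t) \in L].

(* Faces of cardinality at most k, i.e. of dimension at most k - 1:
   skelc k K = skel_(k-1)(K). *)
Definition skelc (m : nat) (k : nat) (K : {set {set 'I_m}}) : {set {set 'I_m}} :=
  [set s in K | (#|s| <= k)%N].

Definition mnm_supp (m : nat) (mu : 'X_{1..m}) : {set 'I_m} :=
  [set v | (mu v != 0)%N].

Definition dlin (m : nat) (l : 'I_m -> R) (P : {mpoly R[m]}) : {mpoly R[m]} :=
  \sum_(v < m) l v *: mderiv v P.

Definition affine_stress (m e : nat) (K : {set {set 'I_m}})
    (r : 'I_m -> 'I_e -> R) (Kf : R -> Prop) (i : nat) (P : {mpoly R[m]}) : Prop :=
  [/\ (forall mu, Kf P@_mu),
      P \is i.-homog,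
      (forall mu, mu \in msupp P -> mnm_supp mu \in K),
      (forall t : 'I_e, dlin (fun v => r v t) P = 0) &
      dlin (fun _ => 1) P = 0].

Definition sqfree (m : nat) (s : {set 'I_m}) : 'X_{1..m} :=
  [multinom (nat_of_bool (j \in s)) | j < m].

Definition stress_supp (m : nat) (i : nat) (P : {mpoly R[m]}) : {set {set 'I_m}} :=
  [set t : {set 'I_m} | [exists s : {set 'I_m},
     [&& #|s| == i, P@_(sqfree s) != 0 & t \subset s]]].

(* the lifted configuration p : {0..n} -> R^d of the paper
   p(0) = (0,...,0,-1), p(s) = ((1 + a_s) p'(s), a_s) *)
Definition lift_config (n d : nat) (p' : 'I_n -> 'I_d.-1 -> R) (a : 'I_n -> R)
    : 'I_n.+1 -> 'I_d -> R :=
  fun v t =>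
    match unlift ord0 v with
    | None => if val t == d.-1 then -1 else 0
    | Some s =>
        match (insub (val t) : option 'I_d.-1) with
        | Some t' => (1 + a s) * p' s t'
        | None => a s
        end
    end.

End Defs.

(* The map is psi(w) = w(y_1, ..., y_n) with y_s = (x_s - x_0) / (1 + a_s),
   where x_0 is the apex and x_s the copy of the vertex s of Lambda. Since
   p(s) - p(0) = (1 + a_s) (p'(s), 1) and every y_s is killed by the affine
   derivative, the chain rule turns each linear and affine stress condition of
   (Gamma, p) into one of (Lambda, p'); as y_s is a linear form in x_0 and x_s
   only, psi also preserves the degree, the faces and the field of definition.
   For the support: the coefficient in psi(w) of a squarefree x_sigma with
   0 not in sigma is w_sigma times a nonzero scalar, and that of x_0 x_tau is,
   up to a nonzero scalar, sum_u (tau_u + 1) w_(tau + u) / (1 + a_u). As the a_u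
   are algebraically independent over F', this sum vanishes only if all the
   w_(tau + u) do. As p' is generic, the w_(tau + u) with u in tau vanish as soon
   as those with u outside tau do: the stress conditions read at x_tau then give
   an affine dependence among the at most d points p'(u), u in tau. Together
   these identify the facets of supp psi(w) with those of the cone over
   supp w. *)

From HB Require Import structures.
From mathcomp Require Import all_boot all_order all_algebra.
From mathcomp Require Import boolp reals.
From mathcomp Require Import mpoly.
From mathcomp Require Import zify.
Import Order.TTheory GRing.Theory Num.Theory.
Local Open Scope ring_scope.

Set Implicit Arguments.
Unset Strict Implicit.
Unset Printing Implicit Defensive.

(** * Substitution in multivariate polynomials *)

Section MPolyComp.
Variable R : comNzRingType.

Lemma mpoly_ring_ind n (P : {mpoly R[n]} -> Prop) :
  P 1 -> (forall i, P 'X_i) -> (forall p q, P p -> P q -> P (p + q)) ->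
  (forall p q, P p -> P q -> P (p * q)) -> (forall c p, P p -> P (c *: p)) ->
  forall p, P p.
Proof.
move=> P1 PX PD PM PZ p; have P0 : P 0 by rewrite -(scale0r 1); apply: PZ.
rewrite [p]mpolyE; elim/big_ind: _ => // m _; apply: PZ.
rewrite mpolyXE_id; elim/big_ind: _ => // i _.
by elim: (m i) => [|k IHk]; rewrite ?expr0 ?exprS; auto.
Qed.

Lemma mderivXU n (u i : 'I_n) : ('X_i : {mpoly R[n]})^`M(u) = (i == u)%:R.
Proof.
rewrite mderivX mnm1E; case: eqP => [->|_]; last by rewrite scale0r.
rewrite (_ : U_(u) - U_(u) = 0)%MM ?mpolyX0 ?scale1r //.
by apply/mnmP => j; rewrite mnmBE subnn mnm0E.
Qed.

Lemma mderiv_comp_mpoly n k (g : n.-tuple {mpoly R[k]}) (j : 'I_k) p :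
  (p \mPo g)^`M(j) = \sum_(u < n) (p^`M(u) \mPo g) * (tnth g u)^`M(j).
Proof.
elim/mpoly_ring_ind: p.
- rewrite comp_mpoly1 -mpolyC1 mderivC big1 // => u _.
  by rewrite mderivC comp_mpolyC mpolyC0 mul0r.
- move=> i; rewrite comp_mpolyXU -tnth_nth (bigD1 i) //= big1 => [|u /negbTE ui].
    by rewrite mderivXU eqxx comp_mpoly1 mul1r addr0.
  by rewrite mderivXU eq_sym ui comp_mpoly0 mul0r.
- move=> p q Dp Dq; rewrite comp_mpolyD mderivD Dp Dq -big_split /=.
  by apply: eq_bigr => u _; rewrite mderivD comp_mpolyD mulrDl.
- move=> p q Dp Dq; rewrite rmorphM /= mderivM Dp Dq mulr_suml mulr_sumr -big_split /=.
  apply: eq_bigr => u _; rewrite mderivM comp_mpolyD !rmorphM /= mulrDl.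
  by congr (_ + _); rewrite -!mulrA; congr (_ * _); rewrite mulrC.
- move=> c p Dp; rewrite comp_mpolyZ mderivZ Dp scaler_sumr.
  by apply: eq_bigr => u _; rewrite mderivZ comp_mpolyZ scalerAl.
Qed.

Lemma comp_mpolyA n k l (g : n.-tuple {mpoly R[k]}) (h : k.-tuple {mpoly R[l]}) p :
  (p \mPo g) \mPo h = p \mPo [tuple tnth g u \mPo h | u < n].
Proof.
rewrite [p \mPo g]comp_mpolyE raddf_sum [RHS]comp_mpolyE; apply: eq_bigr => m _.
rewrite /= comp_mpolyZ rmorph_prod /=; congr (_ *: _).
by apply: eq_bigr => u _; rewrite rmorphXn /= tnth_mktuple.
Qed.

Lemma comp_mpoly_dhomog n k (g : n.-tuple {mpoly R[k]}) p d :
  (forall u, tnth g u \is 1.-homog) -> p \is d.-homog -> p \mPo g \is d.-homog.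
Proof.
move=> g1 /dhomogP pd; rewrite comp_mpolyE big_seq rpred_sum // => m /pd <-.
apply: dhomogZ; change (\prod_(i < n) tnth g i ^+ m i \is (mdeg m).-homog).
rewrite mdegE; elim/big_rec2: _ => [|u e q _ qe]; first exact: dhomog1.
by have := dhomogMn (m u) (g1 u); rewrite mul1n => /dhomogM; apply.
Qed.

Lemma comp_mpolyOver n k (S : subringClosed R) (g : n.-tuple {mpoly R[k]}) p :
  (forall u, tnth g u \is a mpolyOver k S) -> p \is a mpolyOver n S ->
  p \mPo g \is a mpolyOver k S.
Proof.
move=> gS /mpolyOverP pS; rewrite comp_mpolyE rpred_sum // => m _.
by rewrite mpolyOverZ // rpred_prod // => u _; rewrite rpredX.
Qed.

Lemma msupp_comp_mpoly n k (g : n.-tuple {mpoly R[k]}) p M :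
  M \in msupp (p \mPo g) ->
  exists2 m, m \in msupp p & M \in msupp (\prod_(u < n) tnth g u ^+ m u).
Proof.
rewrite comp_mpolyE => /msupp_sum_le; rewrite filter_predT.
by case/flattenP=> _ /mapP[m mp ->] /msuppZ_le; exists m.
Qed.

End MPolyComp.

Section MPolyOn.
Variables (R : nzRingType) (k : nat) (T : {set 'I_k}).

Definition mpoly_on_pred (q : {mpoly R[k]}) :=
  all (fun M => mnm_supp M \subset T) (msupp q).
Definition mpoly_on := [qualify q | mpoly_on_pred q].

Lemma mpoly_onP q :
  reflect {in msupp q, forall M, mnm_supp M \subset T} (q \is mpoly_on).
Proof. exact: allP. Qed.

Fact mpoly_on_subring_closed : subring_closed mpoly_on.
Proof.
split.
- apply/mpoly_onP => M; rewrite msupp1 inE => /eqP ->.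
  by apply/subsetP => j; rewrite inE mnm0E.
- move=> p q /mpoly_onP pT /mpoly_onP qT; apply/mpoly_onP => M /msuppB_le.
  by rewrite mem_cat => /orP[/pT|/qT].
- move=> p q /mpoly_onP pT /mpoly_onP qT; apply/mpoly_onP => M.
  move=> /msuppM_le /allpairsP[[m1 m2] /= [/pT m1T /qT m2T ->]].
  apply/subsetP => j; rewrite inE mnmDE addn_eq0 negb_and.
  by case/orP => mj; [apply: (subsetP m1T) | apply: (subsetP m2T)]; rewrite inE.
Qed.

HB.instance Definition _ :=
  GRing.isSubringClosed.Build {mpoly R[k]} mpoly_on_pred mpoly_on_subring_closed.

Lemma mpoly_onZ c q : q \is mpoly_on -> c *: q \is mpoly_on.
Proof. by move=> /mpoly_onP qT; apply/mpoly_onP => M /msuppZ_le /qT. Qed.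

Lemma mpoly_onXU j : j \in T -> 'X_j \is mpoly_on.
Proof.
move=> jT; apply/mpoly_onP => M; rewrite msuppX inE => /eqP ->.
by apply/subsetP => i; rewrite inE mnm1E; case: (eqVneq j i) => [<-|].
Qed.

End MPolyOn.

Arguments mpoly_on {R k} T.

Section Substitutions.
Variables (R : comNzRingType) (n : nat).

Definition lift0_mnm (m : 'X_{1..n}) : 'X_{1..n.+1} :=
  [multinom if unlift ord0 j is Some u then m u else 0%N | j < n.+1].

Definition drop0_tuple : n.+1.-tuple {mpoly R[n]} :=
  [tuple if unlift ord0 j is Some u then 'X_u else 0 | j < n.+1].

Definition scale_tuple (b : 'I_n -> R) : n.-tuple {mpoly R[n]} :=
  [tuple b u *: 'X_u | u < n].

Lemma comp_drop0X (M : 'X_{1..n.+1}) :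
  'X_[M] \mPo drop0_tuple =
  (M ord0 == 0%N)%:R *: 'X_[[multinom M (lift ord0 u) | u < n]].
Proof.
rewrite comp_mpolyX big_ord_recl tnth_mktuple unlift_none expr0n mpolyXE_id.
rewrite -mul_mpolyC; congr (_ * _); first by case: (_ == _).
by apply: eq_bigr => u _; rewrite tnth_mktuple liftK mnmE.
Qed.

Lemma mcoeff_comp_drop0 q m : (q \mPo drop0_tuple)@_m = q@_(lift0_mnm m).
Proof.
rewrite comp_mpolyEX [in RHS](mpolyE q) !raddf_sum /=; apply: eq_bigr => M _.
rewrite comp_drop0X !mcoeffZ !mcoeffX; congr (_ * _).
have -> : (M == lift0_mnm m) =
    (M ord0 == 0%N) && ([multinom M (lift ord0 u) | u < n] == m).
  apply/eqP/andP => [->|[/eqP M0 /eqP <-]].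
    rewrite !mnmE unlift_none; split=> //.
    by apply/eqP/mnmP => u; rewrite !mnmE liftK.
  by apply/mnmP => j; rewrite mnmE; case: unliftP => [u ->|->]; rewrite ?mnmE.
by case: (_ == _); rewrite /= ?mul0r ?mul1r.
Qed.

Lemma mcoeff_comp_scale b p m : (p \mPo scale_tuple b)@_m = p@_m * mmap1 b m.
Proof.
rewrite comp_mpolyEX [in RHS](mpolyE p) !raddf_sum big_distrl /=.
apply: eq_bigr => M _; rewrite comp_mpolyX.
under eq_bigr do rewrite tnth_mktuple exprZn.
rewrite scaler_prod -mpolyXE_id !mcoeffZ !mcoeffX.
by case: eqP => [->|_]; rewrite ?mulr1 ?mulr0 ?mul0r.
Qed.

End Substitutions.

Arguments drop0_tuple {R n}.

Section LiftSets.
Variable n : nat.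
Implicit Types s : {set 'I_n}.

Lemma ord0_notin_lift s : ord0 \notin lift ord0 @: s.
Proof. by apply/imsetP => -[u _ /eqP]; rewrite (negbTE (neq_lift _ _)). Qed.

Lemma preim_lift s : lift ord0 @^-1: (lift ord0 @: s) = s.
Proof. by apply/setP => u; rewrite inE (mem_imset _ _ (@lift_inj _ ord0)). Qed.

Lemma preim_lift_apex s : lift ord0 @^-1: (ord0 |: lift ord0 @: s) = s.
Proof.
apply/setP => u; rewrite !inE (mem_imset _ _ (@lift_inj _ ord0)).
by rewrite [_ == ord0]eq_sym (negbTE (neq_lift _ _)).
Qed.

Lemma card_lift s : #|lift ord0 @: s| = #|s|.
Proof. exact/card_imset/lift_inj. Qed.

Lemma card_lift_apex s : #|ord0 |: lift ord0 @: s| = #|s|.+1.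
Proof. by rewrite cardsU1 ord0_notin_lift card_lift. Qed.

Variant lift0_set_spec : {set 'I_n.+1} -> Type :=
  | Lift0Base s : lift0_set_spec (lift ord0 @: s)
  | Lift0Apex s : lift0_set_spec (ord0 |: lift ord0 @: s).

Lemma lift0_setP S : lift0_set_spec S.
Proof.
have S_lift : S :\ ord0 = lift ord0 @: (lift ord0 @^-1: S).
  apply/setP => j; rewrite !inE; case: (unliftP ord0 j) => [u ->|->].
    rewrite (mem_imset _ _ (@lift_inj _ ord0)) inE.
    by rewrite [_ == ord0]eq_sym (negbTE (neq_lift _ _)).
  by rewrite eqxx (negbTE (ord0_notin_lift _)).
have [S0|S0] := boolP (ord0 \in S).
  by rewrite -(setD1K S0) S_lift; constructor.
have -> : S = S :\ ord0.
  by apply/setP => j; rewrite !inE; case: eqP => // ->; rewrite (negbTE S0).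
by rewrite S_lift; constructor.
Qed.

Lemma sqfree_lift s : sqfree (lift ord0 @: s) = lift0_mnm (sqfree s).
Proof.
apply/mnmP => j; rewrite !mnmE; case: unliftP => [u ->|->].
  by rewrite (mem_imset _ _ (@lift_inj _ ord0)) mnmE.
by rewrite (negbTE (ord0_notin_lift _)).
Qed.

Lemma sqfree_lift_apex s :
  sqfree (ord0 |: lift ord0 @: s) = (lift0_mnm (sqfree s) + U_(ord0))%MM.
Proof.
apply/mnmP => j; rewrite mnmDE !mnmE in_setU1; case: unliftP => [u ->|->].
  rewrite [_ == ord0]eq_sym (negbTE (neq_lift _ _)).
  by rewrite (mem_imset _ _ (@lift_inj _ ord0)) mnmE addn0.
by rewrite eqxx.
Qed.

End LiftSets.

Lemma sqfreeU1 n (s : {set 'I_n}) u :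
  u \notin s -> sqfree (u |: s) = (sqfree s + U_(u))%MM.
Proof.
move=> us; apply/mnmP => j; rewrite mnmDE !mnmE in_setU1.
by case: (eqVneq u j) => [<-|]; rewrite ?(negbTE us) //= addn0 eq_sym.
Qed.

Section DirectionalDerivative.
Variables (R : realType) (k : nat).
Implicit Types (l : 'I_k -> R) (P : {mpoly R[k]}).

Lemma eq_dlin l1 l2 P : (forall v, l1 v = l2 v) -> dlin l1 P = dlin l2 P.
Proof. by move=> l12; apply: eq_bigr => v _; rewrite l12. Qed.

Fact dlin_is_semilinear l : semilinear (dlin l).
Proof.
split=> [c P|P Q]; rewrite /dlin ?scaler_sumr -?big_split /=.
  by apply: eq_bigr => v _; rewrite mderivZ !scalerA mulrC.
by apply: eq_bigr => v _; rewrite mderivD scalerDr.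
Qed.

HB.instance Definition _ l := GRing.isSemilinear.Build R {mpoly R[k]} {mpoly R[k]} _
  (dlin l) (dlin_is_semilinear l).

Lemma dlinXU l j : dlin l 'X_j = (l j)%:MP.
Proof.
rewrite /dlin (bigD1 j) //= big1 => [|v /negbTE vj].
  by rewrite mderivXU eqxx addr0 -mul_mpolyC mulr1.
by rewrite mderivXU eq_sym vj scaler0.
Qed.

Lemma dlinN l P : dlin (fun v => - l v) P = - dlin l P.
Proof. by rewrite /dlin -sumrN; apply: eq_bigr => v _; rewrite scaleNr. Qed.

Lemma dlin_delta u P : dlin (fun v => (v == u)%:R) P = P^`M(u).
Proof.
rewrite /dlin (bigD1 u) //= big1 => [|v /negbTE ->]; last by rewrite scale0r.
by rewrite eqxx scale1r addr0.
Qed.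

Lemma mcoeff_dlin l P m :
  (dlin l P)@_m = \sum_(u < k) l u * (P@_(m + U_(u)) *+ (m u).+1).
Proof.
by rewrite raddf_sum /=; apply: eq_bigr => u _; rewrite mcoeffZ mcoeff_mderiv.
Qed.

Lemma dlin_comp_mpoly n (g : n.-tuple {mpoly R[k]}) l (p : {mpoly R[n]}) :
  dlin l (p \mPo g) = \sum_(u < n) (p^`M(u) \mPo g) * dlin l (tnth g u).
Proof.
rewrite /dlin; under eq_bigr do rewrite mderiv_comp_mpoly scaler_sumr.
rewrite exchange_big /=; apply: eq_bigr => u _; rewrite mulr_sumr.
by apply: eq_bigr => v _; rewrite scalerAr.
Qed.

End DirectionalDerivative.

(** * Algebraic independence *)

Definition subfield_pred (R : realType) (K : R -> Prop) : {pred R} :=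
  fun x => `[< K x >].

Lemma genfield_subfield (R : realType) (S : R -> Prop) : is_subfield (genfield S).
Proof.
split=> [K [] //|x y Sx Sy K KK SK|x y Sx Sy K KK SK|x Sx K KK SK];
  case: (KK) => _ KB KM KV.
- by apply: KB; [apply: Sx | apply: Sy].
- by apply: KM; [apply: Sx | apply: Sy].
- by apply: KV; apply: Sx.
Qed.

Lemma ratK_subfield (R : realType) : is_subfield (@ratK R).
Proof.
split=> [|_ _ [q ->] [r ->]|_ _ [q ->] [r ->]|_ [q ->]].
- by exists 1; rewrite rmorph1.
- by exists (q - r); rewrite rmorphB.
- by exists (q * r); rewrite rmorphM.
- by exists q^-1; rewrite fmorphV.
Qed.

Section Subfield.
Variables (R : realType) (K : R -> Prop).
Hypothesis K_subfield : is_subfield K.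

Lemma subfield_predP x : reflect (K x) (x \in subfield_pred K).
Proof. exact: asboolP. Qed.

Lemma subfield_divring_closed : divring_closed (subfield_pred K).
Proof.
case: K_subfield => K1 KB KM KV; split.
- exact/subfield_predP.
- by move=> x y /subfield_predP Kx /subfield_predP Ky; apply/subfield_predP/KB.
- by move=> x y /subfield_predP Kx /subfield_predP Ky; apply/subfield_predP/KM/KV.
Qed.

(* Canonical structures are keyed on the head constant [subfield_pred], so each
   section working over a subfield declares its own local instance. *)
#[local] HB.instance Definition _ :=
  GRing.isDivringClosed.Build R (subfield_pred K) subfield_divring_closed.

Lemma alg_indep_over_eq0 (I : finType) (x : I -> R) (P : {mpoly R[#|I|]}) :
  alg_indep_over K x -> P \is a mpolyOver _ (subfield_pred K) ->
  P.@[fun j => x (enum_val j)] = 0 -> P = 0.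
Proof. by move=> xK /mpolyOverP PK; apply: xK => m; apply/subfield_predP. Qed.

Variables (n : nat) (a : 'I_n -> R).
Hypothesis a_indep : alg_indep_over K a.

Lemma alg_indep_over_neq u c : K c -> a u != c.
Proof.
move=> Kc; apply/eqP => auc.
have P0 : 'X_(enum_rank u) - c%:MP = 0 :> {mpoly R[#|'I_n|]}.
  apply: (alg_indep_over_eq0 a_indep).
    by rewrite rpredB ?mpolyOverX ?mpolyOverC //; apply/subfield_predP.
  by rewrite raddfB /= mevalXU mevalC enum_rankK auc subrr.
have /eqP := congr1 (mcoeff U_(enum_rank u)) P0.
by rewrite mcoeffB mcoeffX mcoeffC mnm1_eq0 eqxx mulr0 subr0 mcoeff0 oner_eq0.
Qed.

Lemma one_add_neq0 u : 1 + a u != 0.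
Proof.
rewrite addrC addr_eq0; apply: alg_indep_over_neq.
by apply/subfield_predP; rewrite rpredN rpred1.
Qed.

Lemma inv_one_add_free (c : 'I_n -> R) : (forall u, K (c u)) ->
  \sum_(u < n) c u * (1 + a u)^-1 = 0 -> forall u, c u = 0.
Proof.
move=> Kc sum0 u0.
pose Q : {mpoly R[#|'I_n|]} :=
  \sum_(u < n) c u *: \prod_(v < n | v != u) (1 + 'X_(enum_rank v)).
have evalQ z :
    Q.@[z] = \sum_(u < n) c u * \prod_(v < n | v != u) (1 + z (enum_rank v)).
  rewrite rmorph_sum /=; apply: eq_bigr => u _; rewrite mevalZ rmorph_prod /=.
  by congr (_ * _); apply: eq_bigr => v _; rewrite rmorphD /= meval1 mevalXU.
have Q0 : Q = 0.
  apply: (alg_indep_over_eq0 a_indep).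
    rewrite rpred_sum // => u _; apply: mpolyOverZ; first exact/subfield_predP.
    by rewrite rpred_prod // => v _; rewrite rpredD ?rpred1 ?mpolyOverX.
  rewrite evalQ -[RHS](mul0r (\prod_(v < n) (1 + a v))) -[in RHS]sum0 big_distrl /=.
  apply: eq_bigr => u _; rewrite [in RHS](bigD1 u) //= mulrA -(mulrA (c u)).
  rewrite mulVf ?one_add_neq0 // mulr1; congr (_ * _).
  by apply: eq_bigr => v _; rewrite enum_rankK.
(* Evaluating Q at minus the u0-th unit vector kills every term but c u0. *)
pose z (j : 'I_#|'I_n|) : R := if enum_val j == u0 then -1 else 0.
have := evalQ z; rewrite Q0 meval0 (bigD1 u0) //= big1 => [|v vu0]; last first.
  by rewrite /z /= enum_rankK (negbTE vu0) addr0.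
rewrite big1 => [|u uu0]; first by rewrite mulr1 addr0.
by rewrite (bigD1 u0) 1?eq_sym //= /z /= enum_rankK eqxx addrN mul0r mulr0.
Qed.

End Subfield.

Lemma rpred_det (R : comNzRingType) (S : subringClosed R) k (A : 'M[R]_k) :
  A \is a mxOver S -> \det A \in S.
Proof.
move=> /mxOverP AS; rewrite rpred_sum // => sg _.
by rewrite rpredM ?rpredX ?rpredN ?rpred1 // rpred_prod.
Qed.

Section GenericAffine.
Variables (R : realType) (n d : nat) (p' : 'I_n -> 'I_d.-1 -> R).
Hypothesis p'_indep :
  alg_indep_over (@ratK R) (fun ut : 'I_n * 'I_d.-1 => p' ut.1 ut.2).
Variable s : {set 'I_n}.
Hypothesis s_small : (#|s| <= d)%N.

#[local] HB.instance Definition _ :=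
  GRing.isDivringClosed.Build R (subfield_pred (@ratK R))
    (subfield_divring_closed (ratK_subfield R)).

(* The rows are the points (1, p'(u)), u in s, cut down to their first #|s|
   coordinates (which exist since #|s| <= d). *)
Definition affine_mx (S : nzRingType) (f : 'I_n -> 'I_d.-1 -> S) : 'M[S]_#|s| :=
  \matrix_(j, l) if l == 0%N :> nat then 1 else oapp (f (enum_val j)) 0 (insub l.-1).

Local Notation generic_affine_mx :=
  (affine_mx (fun u t => 'X_(enum_rank (u, t)) : {mpoly R[#|{: 'I_n * 'I_d.-1}|]})).

Lemma meval_det_generic_affine_mx v :
  (\det generic_affine_mx).@[v] =
  \det (affine_mx (fun u t => v (enum_rank (u, t)))).
Proof.
rewrite -det_map_mx; congr (\det _); apply/matrixP => j l; rewrite !mxE.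
case: ifP => _; first exact: meval1.
by case: insub => [t|]; [exact: mevalXU | exact: meval0].
Qed.

Lemma index_enum_val (j : 'I_#|s|) : index (enum_val j) (enum s) = j.
Proof. by rewrite (enum_val_nth (enum_val j)) index_uniq ?enum_uniq // -cardE. Qed.

Lemma det_generic_affine_mx_neq0 : \det generic_affine_mx != 0.
Proof.
(* Send the j-th point of s to the (j-1)-th unit vector: the matrix becomes
   lower unitriangular. *)
pose z (x : 'I_#|{: 'I_n * 'I_d.-1}|) : R :=
  ((val (enum_val x).2).+1 == index (enum_val x).1 (enum s))%:R.
have zE (j l : 'I_#|s|) : affine_mx (fun u t => z (enum_rank (u, t))) j l =
    if l == 0%N :> nat then 1 else (l == j :> nat)%:R.
  rewrite mxE; case: ifP => // /negbT l0; rewrite /z.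
  case: insubP => [t _ tl|tl].
    by rewrite /= enum_rankK index_enum_val tl prednK ?lt0n.
  by exfalso; move: tl l0 (leq_trans (ltn_ord l) s_small); clear; lia.
apply: contra_neq (@oner_neq0 R) => det0.
have : \det (affine_mx (fun u t => z (enum_rank (u, t)))) = 0.
  by rewrite -meval_det_generic_affine_mx det0 meval0.
rewrite det_trig => [<-|].
  by rewrite big1 // => j _; rewrite zE eqxx; case: ifP.
apply/forallP => i; apply/forallP => j; apply/implyP => ij; rewrite zE.
by rewrite (gtn_eqF (leq_ltn_trans (leq0n i) ij)) (gtn_eqF ij).
Qed.

Lemma det_affine_mx_neq0 : \det (affine_mx p') != 0.
Proof.
apply: contra_neq det_generic_affine_mx_neq0 => det0.
apply: (alg_indep_over_eq0 (ratK_subfield R) p'_indep).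
  apply: rpred_det; apply/mxOverP => j l; rewrite mxE.
  case: ifP => _; first exact: rpred1.
  by case: insub => [t|]; [exact: mpolyOverX | exact: rpred0].
rewrite meval_det_generic_affine_mx -det0; congr (\det _); apply/matrixP => j l.
by rewrite !mxE; case: ifP => //= _; case: insub => //= t; rewrite enum_rankK.
Qed.

Lemma generic_affine_free (c : 'I_n -> R) : (forall u, u \notin s -> c u = 0) ->
  \sum_(u < n) c u = 0 -> (forall t, \sum_(u < n) c u * p' u t = 0) ->
  forall u, c u = 0.
Proof.
move=> c_out c1 cp; pose cr : 'rV[R]_#|s| := \row_j c (enum_val j).
have sum_s (f : 'I_n -> R) :
    \sum_(u < n) c u * f u = \sum_(j < #|s|) c (enum_val j) * f (enum_val j).
  rewrite (bigID (mem s)) /= [X in _ + X]big1 ?addr0 => [|u /c_out ->].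
    exact: big_enum_val.
  by rewrite mul0r.
have cr0 : cr *m affine_mx p' = 0.
  apply/rowP => l; rewrite !mxE; under eq_bigr => j _ do rewrite !mxE.
  have [_|_] := boolP (l == 0%N :> nat).
    by rewrite -[RHS]c1 -(eq_bigr _ (fun u _ => mulr1 (c u))) sum_s.
  case: insub => [t|] /=; last by rewrite big1 // => j _; rewrite mulr0.
  by rewrite -[RHS](cp t) sum_s.
have {cr0} : cr = 0.
  have unit_mx : affine_mx p' \in unitmx.
    by rewrite unitmxE unitfE det_affine_mx_neq0.
  by rewrite -(mulmxK unit_mx cr) cr0 mul0mx.
move=> /rowP cr0 u; case: (boolP (u \in s)) => us; last exact: c_out.
by have := cr0 (enum_rank_in us u); rewrite !mxE enum_rankK_in.
Qed.

End GenericAffine.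

Lemma stress_coefU_eq0 (R : realType) (n d : nat) (Lam : {set {set 'I_n}})
    (p' : 'I_n -> 'I_d.-1 -> R) (K : R -> Prop) i w (s : {set 'I_n}) :
  alg_indep_over (@ratK R) (fun ut : 'I_n * 'I_d.-1 => p' ut.1 ut.2) ->
  affine_stress Lam p' K i w -> (#|s| <= d)%N ->
  (forall u, u \notin s -> w@_(sqfree s + U_(u)) = 0) ->
  forall u, w@_(sqfree s + U_(u)) = 0.
Proof.
move=> p'_indep [_ _ _ w_lin w_aff] s_small w_out.
have coefE l :
    (dlin l w)@_(sqfree s) = (\sum_(u < n) l u * w@_(sqfree s + U_(u))) *+ 2.
  rewrite mcoeff_dlin -sumrMnl; apply: eq_bigr => u _; rewrite mnmE.
  case: (boolP (u \in s)) => us; first by rewrite mulrnAr.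
  by rewrite w_out // !(mul0rn, mulr0).
apply: (generic_affine_free p'_indep s_small) => [u /w_out //||t].
  have /eqP := congr1 (mcoeff (sqfree s)) w_aff.
  rewrite coefE mcoeff0 mulrn_eq0 /=.
  by under eq_bigr do rewrite mul1r; move/eqP.
have /eqP := congr1 (mcoeff (sqfree s)) (w_lin t).
rewrite coefE mcoeff0 mulrn_eq0 /=.
by under eq_bigr do rewrite mulrC; move/eqP.
Qed.

(** * The stress on the cone *)

Section ConeStress.
Variables (R : realType) (n : nat) (a : 'I_n -> R).

Definition cone_scale u := (1 + a u)^-1.

Definition cone_tuple : n.-tuple {mpoly R[n.+1]} :=
  [tuple cone_scale u *: ('X_(lift ord0 u) - 'X_ord0) | u < n].

Definition cone_stress (w : {mpoly R[n]}) := w \mPo cone_tuple.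

Lemma cone_tuple_homog u : tnth cone_tuple u \is 1.-homog.
Proof. by rewrite tnth_mktuple dhomogZ // rpredB // dhomogX /= mdeg1. Qed.

Lemma dlin_cone_stress l w :
  dlin l (cone_stress w) =
  cone_stress (dlin (fun u => (l (lift ord0 u) - l ord0) * cone_scale u) w).
Proof.
rewrite dlin_comp_mpoly /cone_stress raddf_sum /=; apply: eq_bigr => u _.
have -> : dlin l (tnth cone_tuple u) =
    ((l (lift ord0 u) - l ord0) * cone_scale u)%:MP.
  rewrite tnth_mktuple linearZ linearB /= !dlinXU.
  by rewrite -mpolyCB -mul_mpolyC -mpolyCM mulrC.
by rewrite mulrC mul_mpolyC comp_mpolyZ.
Qed.

Lemma cone_stress_drop0 w :
  cone_stress w \mPo drop0_tuple = w \mPo scale_tuple cone_scale.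
Proof.
rewrite comp_mpolyA; congr (w \mPo _); apply: eq_from_tnth => u.
rewrite !tnth_mktuple comp_mpolyZ comp_mpolyB !comp_mpolyXU -!tnth_nth.
by rewrite !tnth_mktuple liftK unlift_none subr0.
Qed.

Lemma mcoeff_cone_stress w m :
  (cone_stress w)@_(lift0_mnm m) = w@_m * mmap1 cone_scale m.
Proof. by rewrite -mcoeff_comp_drop0 cone_stress_drop0 mcoeff_comp_scale. Qed.

Lemma mcoeff_cone_stress_apex w m :
  (cone_stress w)@_(lift0_mnm m + U_(ord0)) =
  - ((dlin cone_scale w)@_m * mmap1 cone_scale m).
Proof.
have := mcoeff_mderiv ord0 (cone_stress w) (lift0_mnm m).
rewrite mnmE unlift_none mulr1n => <-.
rewrite -dlin_delta dlin_cone_stress mcoeff_cone_stress -mulNr -mcoeffN -dlinN.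
congr (_@__ * _); apply: eq_dlin => u.
by rewrite eq_sym (negbTE (neq_lift _ _)) eqxx sub0r mulN1r.
Qed.

Lemma cone_stress_faces (Lam : {set {set 'I_n}}) w M :
  is_complex Lam -> {in msupp w, forall m, mnm_supp m \in Lam} ->
  M \in msupp (cone_stress w) -> mnm_supp M \in cone Lam.
Proof.
case=> _ Lam_closed _ wLam /msupp_comp_mpoly[m /wLam mLam].
have : \prod_(u < n) tnth cone_tuple u ^+ m u
    \is mpoly_on (ord0 |: lift ord0 @: mnm_supp m).
  rewrite rpred_prod // => u _.
  have [->|mu] := eqVneq (m u) 0%N; first by rewrite rpred1.
  rewrite rpredX // tnth_mktuple mpoly_onZ // rpredB // mpoly_onXU // !inE ?eqxx //.
  by rewrite (mem_imset _ _ (@lift_inj _ ord0)) inE mu orbT.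
move=> /mpoly_onP MT /MT Msub; rewrite inE; apply: Lam_closed mLam _.
apply/subsetP => u; rewrite inE => /(subsetP Msub); rewrite !inE.
rewrite [_ == ord0]eq_sym (negbTE (neq_lift _ _)).
by rewrite (mem_imset _ _ (@lift_inj _ ord0)) inE.
Qed.

End ConeStress.

Section ConeAffineStress.
Variables (R : realType) (d n : nat) (Lam : {set {set 'I_n}}).
Variables (p' : 'I_n -> 'I_d.-1 -> R) (a : 'I_n -> R) (F F' : R -> Prop).
Hypothesis Lam_complex : is_complex Lam.
Hypothesis F_subfield : is_subfield F.
Hypothesis F'F : forall x, F' x -> F x.
Hypothesis Fa : forall u, F (a u).
Hypothesis a_neq : forall u, 1 + a u != 0.

#[local] HB.instance Definition _ :=
  GRing.isDivringClosed.Build R (subfield_pred F) (subfield_divring_closed F_subfield).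

Lemma cone_stress_over w : (forall m, F' w@_m) -> forall M, F (cone_stress a w)@_M.
Proof.
move=> wF' M; apply/subfield_predP; move: M.
suff : cone_stress a w \is a mpolyOver _ (subfield_pred F) by move/mpolyOverP.
apply: comp_mpolyOver.
  move=> u; rewrite tnth_mktuple mpolyOverZ ?rpredB ?mpolyOverX //.
  by rewrite rpredV rpredD ?rpred1 //; apply/subfield_predP.
by apply/mpolyOverP => m; apply/subfield_predP/F'F.
Qed.

Lemma dlin_cone_stress_eq0 l w :
  dlin (fun u => (l (lift ord0 u) - l ord0) * cone_scale a u) w = 0 ->
  dlin l (cone_stress a w) = 0.
Proof. by rewrite dlin_cone_stress => ->; rewrite /cone_stress comp_mpoly0. Qed.

Lemma cone_stress_affine i w : affine_stress Lam p' F' i w ->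
  affine_stress (cone Lam) (lift_config p' a) F i (cone_stress a w).
Proof.
case=> wF' w_homog w_faces w_lin w_aff; split.
- exact: cone_stress_over.
- exact: comp_mpoly_dhomog (cone_tuple_homog a) w_homog.
- by move=> M; apply: cone_stress_faces.
- move=> t; apply: dlin_cone_stress_eq0; rewrite /lift_config unlift_none.
  case: insubP => [t' /ltn_eqF t'd t't|td].
    rewrite -(w_lin t'); apply: eq_dlin => u; rewrite liftK t'd subr0 mulrAC.
    by rewrite /cone_scale mulfV ?mul1r.
  have -> : val t == d.-1 by move: (ltn_ord t) td => /=; lia.
  rewrite -w_aff; apply: eq_dlin => u.
  by rewrite liftK opprK addrC /cone_scale mulfV.
- apply: dlin_cone_stress_eq0; rewrite /dlin big1 // => u _.
  by rewrite subrr mul0r scale0r.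
Qed.

End ConeAffineStress.

Section ConeSupport.
Variables (R : realType) (d n : nat) (Lam : {set {set 'I_n}}).
Variables (p' : 'I_n -> 'I_d.-1 -> R) (a : 'I_n -> R) (F' : R -> Prop).
Hypothesis p'_indep :
  alg_indep_over (@ratK R) (fun ut : 'I_n * 'I_d.-1 => p' ut.1 ut.2).
Hypothesis F'_subfield : is_subfield F'.
Hypothesis a_indep : alg_indep_over F' a.
Variables (i : nat) (w : {mpoly R[n]}).
Hypothesis w_stress : affine_stress Lam p' F' i w.
Hypothesis i_le_d : (i <= d)%N.

#[local] HB.instance Definition _ := GRing.isDivringClosed.Build R
  (subfield_pred F') (subfield_divring_closed F'_subfield).

Lemma mmap1_cone_scale_neq0 m : mmap1 (cone_scale a) m != 0.
Proof.
apply/prodf_neq0 => u _; rewrite expf_neq0 // /cone_scale invr_eq0.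
exact/(one_add_neq0 F'_subfield a_indep).
Qed.

Lemma cone_facet_sub (S : {set 'I_n.+1}) :
  #|S| = i -> (cone_stress a w)@_(sqfree S) != 0 ->
  exists2 s : {set 'I_n},
    (#|s| == i) && (w@_(sqfree s) != 0) & lift ord0 @^-1: S \subset s.
Proof.
case: S / lift0_setP => s.
  rewrite card_lift sqfree_lift mcoeff_cone_stress preim_lift => cs.
  by rewrite mulf_eq0 negb_or => /andP[ws _]; exists s; rewrite ?cs ?eqxx.
rewrite card_lift_apex sqfree_lift_apex mcoeff_cone_stress_apex preim_lift_apex.
rewrite oppr_eq0 mulf_eq0 negb_or mmap1_cone_scale_neq0 andbT => cs dw.
have : [exists u in ~: s, w@_(sqfree s + U_(u)) != 0].
  apply: contraNT dw => /exists_inPn w_out; rewrite mcoeff_dlin big1 // => u _.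
  rewrite (stress_coefU_eq0 p'_indep w_stress) ?mul0rn ?mulr0 //.
    by move: i_le_d; rewrite -cs; lia.
  by move=> v vs; apply/eqP/negbNE/w_out; rewrite inE.
case/exists_inP => u; rewrite inE => us wu.
exists (u |: s); last exact: subsetUr.
by rewrite cardsU1 us -cs eqxx sqfreeU1.
Qed.

Lemma cone_facet_sup (t : {set 'I_n.+1}) (s : {set 'I_n}) :
  (#|t| <= i)%N -> #|s| = i -> w@_(sqfree s) != 0 -> lift ord0 @^-1: t \subset s ->
  exists2 S : {set 'I_n.+1},
    (#|S| == i) && ((cone_stress a w)@_(sqfree S) != 0) & t \subset S.
Proof.
case: t / lift0_setP => t.
  rewrite preim_lift => _ cs ws ts; exists (lift ord0 @: s); last exact: imsetS.
  rewrite card_lift cs eqxx sqfree_lift mcoeff_cone_stress.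
  by rewrite mulf_neq0 ?mmap1_cone_scale_neq0.
rewrite card_lift_apex preim_lift_apex => ti cs ws ts.
have [u us ut] : exists2 u, u \in s & u \notin t.
  by apply/subsetPn; apply: contraTN ti => /subset_leq_card; rewrite -ltnNge cs.
have us0 : u \notin s :\ u by rewrite !inE eqxx.
exists (ord0 |: lift ord0 @: (s :\ u)); last by rewrite setUS // imsetS // subsetD1 ts.
rewrite card_lift_apex -cs (cardsD1 u s) us eqxx /=.
rewrite sqfree_lift_apex mcoeff_cone_stress_apex oppr_eq0 mulf_eq0 negb_or.
rewrite mmap1_cone_scale_neq0 andbT mcoeff_dlin; apply/eqP => sum0.
have c_F' v : F' (w@_(sqfree (s :\ u) + U_(v)) *+ (sqfree (s :\ u) v).+1).
  by apply/subfield_predP; rewrite rpredMn //; apply/subfield_predP; case: w_stress.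
have := inv_one_add_free F'_subfield a_indep c_F'.
move/(_ (etrans (eq_bigr _ (fun v _ => mulrC _ _)) sum0) u)/eqP.
by rewrite -sqfreeU1 // setD1K // mnmE (negPf us0) mulr1n (negPf ws).
Qed.

Lemma stress_supp_cone_stress :
  stress_supp i (cone_stress a w) = skelc i (cone (stress_supp i w)).
Proof.
apply/setP => t; rewrite !inE; apply/idP/idP.
  case/existsP => S /and3P[/eqP cS nz tS].
  have [s /andP[cs ws] Ss] := cone_facet_sub cS nz.
  have -> : (#|t| <= i)%N by rewrite -cS subset_leq_card.
  rewrite andbT; apply/existsP; exists s; rewrite cs ws /=.
  exact: subset_trans (preimsetS _ tS) Ss.
case/andP => /existsP[s /and3P[/eqP cs ws ts]] ti.
have [S /andP[cS nz] tS] := cone_facet_sup ti cs ws ts.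
by apply/existsP; exists S; rewrite cS nz.
Qed.

End ConeSupport.

Theorem lemma3p2 (R : realType) (d n : nat) (Lam : {set {set 'I_n}})
    (p' : 'I_n -> 'I_d.-1 -> R) (a : 'I_n -> R) (F : R -> Prop) :
  (1 <= d)%N ->
  is_complex Lam -> has_dim_card Lam d.-1 ->
  alg_indep_over (@ratK R) (fun st : 'I_n * 'I_d.-1 => p' st.1 st.2) ->
  let F' := genfield (fun y => exists s t, y = p' s t) in
  alg_indep_over F' a ->
  is_subfield F -> (forall x, F' x -> F x) -> (forall s, F (a s)) ->
  forall i : nat, (i <= d.-1./2)%N ->
  exists psi : {mpoly R[n]} -> {mpoly R[n.+1]},
    [/\ (forall w, affine_stress Lam p' F' i w ->
           affine_stress (cone Lam) (lift_config p' a) F i (psi w)),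
        (forall c w1 w2, F' c ->
           affine_stress Lam p' F' i w1 -> affine_stress Lam p' F' i w2 ->
           psi (c *: w1 + w2) = c *: psi w1 + psi w2) &
        (forall w, affine_stress Lam p' F' i w ->
           stress_supp i (psi w) = skelc i (cone (stress_supp i w)))].
Proof.
move=> _ Lam_complex _ p'_indep F' a_indep F_subfield F'F Fa i i_le.
have F'_subfield : is_subfield F' := genfield_subfield _.
exists (cone_stress a); split.
- move=> w; apply: cone_stress_affine => // u.
  exact/(one_add_neq0 F'_subfield a_indep).
- by move=> c w1 w2 _ _ _; rewrite /cone_stress comp_mpolyD comp_mpolyZ.
- move=> w w_stress.
  apply: (stress_supp_cone_stress p'_indep F'_subfield a_indep w_stress).
  by apply: leq_trans i_le _; rewrite leq_half_double; lia.
Qed.
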